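(* For every target rate $r>0$, $P_{\rm r}>0$ and $\mathcal C_x\in[0,1)$, writing $\beta=\frac{\Psi_r(\mathcal C_x)}{P_{\rm r}\theta_{\rm rd}(1-\mathcal C_x^2)}$, \[ \mathcal P_{\rm rd}(P_{\rm r},\mathcal C_x)=1-\frac{e^{-\beta}}{\Gamma(m_{\rm sd})\theta_{\rm sd}^{m_{\rm sd}}}\sum_{m=0}^{m_{\rm rd}-1}\sum_{k=0}^m\binom{m}{k}\frac{P_{\rm s}^k\,\Gamma(k+m_{\rm sd})\,\beta^m}{\Gamma(m+1)\left(P_{\rm s}\beta+\frac1{\theta_{\rm sd}}\right)^{k+m_{\rm sd}}}. \]
   Context: Let $P_{\rm s}>0$, $P_{\rm r}>0$ be the source and relay transmit powers. For links $ij\in\{\mathrm{rd},\mathrm{sd}\}$ let $g_{ij}$ be independent random channel gains, $g_{ij}$ gamma distributed with integer shape parameter $m_{ij}\ge1$ and scale $\theta_{ij}=\pi_{ij}/m_{ij}$, $\pi_{ij}=\mathbb E[g_{ij}]>0$; i.e. density $x^{m_{ij}-1}e^{-x/\theta_{ij}}/(\Gamma(m_{ij})\theta_{ij}^{m_{ij}})$, $x\ge0$. For $\mathcal C_x\in[0,1)$ define $R_{\rm rd}(P_{\rm r},\mathcal C_x)=\tfrac12\log_2\frac{(P_{\rm r}g_{\rm rd}+P_{\rm s}g_{\rm sd}+1)^2-(P_{\rm r}g_{\rm rd}\mathcal C_x)^2}{(P_{\rm s}g_{\rm sd}+1)^2}$. For a target rate $r>0$ put $\gamma=2^{2r}-1$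 and $\Psi_r(x)=\sqrt{1+\gamma(1-x^2)}-1$. The R–D outage probability is $\mathcal P_{\rm rd}=\mathbb P\{R_{\rm rd}<r\}$. *)

From Stdlib Require Import Reals Lra Factorial Binomial.
Open Scope R_scope.

Definition Gamma_nat (n : nat) : R := INR (fact (n - 1)).

Definition gamma_pdf (m : nat) (th x : R) : R :=
  if Rle_dec 0 x then x ^ (m - 1) * exp (- x / th) / (Gamma_nat m * th ^ m) else 0.

Definition log2 (x : R) : R := ln x / ln 2.

Definition R_rd (Ps Pr Cx g_rd g_sd : R) : R :=
  / 2 * log2 (((Pr * g_rd + Ps * g_sd + 1) ^ 2 - (Pr * g_rd * Cx) ^ 2)
               / (Ps * g_sd + 1) ^ 2).

Definition gamma_r (r : R) : R := Rpower 2 (2 * r) - 1.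
Definition Psi (r x : R) : R := sqrt (1 + gamma_r r * (1 - x ^ 2)) - 1.

Definition improper_integral0 (f : R -> R) (l : R) : Prop :=
  (forall b, 0 <= b -> inhabited (Riemann_integrable f 0 b)) /\
  (forall eps, 0 < eps -> exists B, 0 <= B /\
     forall b (pr : Riemann_integrable f 0 b), B <= b -> Rabs (RiemannInt pr - l) < eps).


(* P_rd = P{ R_rd < r } for independent g_rd ~ Gamma(m_rd, th_rd), g_sd ~ Gamma(m_sd, th_sd),
   written as the iterated integral of the indicator against the product density:
   P_rd = int_0^oo f_sd(y) ( int_0^oo 1{R_rd(x,y) < r} f_rd(x) dx ) dy. *)
Definition outage_prob_is (Ps Pr Cx r : R) (m_rd : nat) (th_rd : R)
    (m_sd : nat) (th_sd : R) (p : R) : Prop :=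
  exists I : R -> R,
    (forall y, 0 <= y ->
       improper_integral0
         (fun x => (if Rlt_dec (R_rd Ps Pr Cx x y) r then 1 else 0) * gamma_pdf m_rd th_rd x) (I y)) /\
    improper_integral0 (fun y => gamma_pdf m_sd th_sd y * I y) p.

(* For fixed [g_sd = y], the rate [R_rd] is increasing in [g_rd], and solving a quadratic shows
   that the outage event is [g_rd < beta (Ps y + 1) th_rd]; the inner probability is therefore the
   Erlang distribution function [1 - exp (- lam) * sum_(m < m_rd) lam ^ m / m!] at
   [lam = beta (Ps y + 1)].  Expanding [(Ps y + 1) ^ m] binomially, the outer expectation becomes a
   finite combination of gamma integrals [int_0^oo y ^ n exp (- c y) dy = n! / c ^ (n + 1)], which
   are computed from an explicit antiderivative. *)

From Coquelicot Require Import Coquelicot.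
From Stdlib Require Import Reals Factorial Binomial Lra Lia.
Open Scope R_scope.

Definition is_RInt_0_pinfty (f : R -> R) (l : R) : Prop :=
  (forall b, 0 <= b -> ex_RInt f 0 b) /\ is_lim (fun b => RInt f 0 b) p_infty l.

Lemma improper_integral0_of_is_RInt_0_pinfty f l :
  is_RInt_0_pinfty f l -> improper_integral0 f l.
Proof.
  intros [Hex Hlim]. split.
  - intros b hb. constructor. apply ex_RInt_Reals_0. now apply Hex.
  - intros eps heps. apply is_lim_spec in Hlim.
    destruct (Hlim (mkposreal eps heps)) as [M HM].
    exists (Rmax 0 (M + 1)). split; [apply Rmax_l|].
    intros b pr hb. rewrite <- RInt_Reals. apply HM.
    pose proof (Rmax_r 0 (M + 1)). lra.
Qed.

Lemma is_RInt_0_pinfty_ext f g l :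
  (forall x, 0 < x -> f x = g x) -> is_RInt_0_pinfty f l -> is_RInt_0_pinfty g l.
Proof.
  intros Hfg [Hex Hlim].
  assert (HI : forall b, 0 <= b -> forall x, Rmin 0 b < x < Rmax 0 b -> f x = g x).
  { intros b hb x hx. rewrite Rmin_left in hx by lra. apply Hfg. lra. }
  split.
  - intros b hb. apply (ex_RInt_ext f); [apply HI; exact hb | apply Hex; exact hb].
  - apply is_lim_ext_loc with (fun b => RInt f 0 b); [|exact Hlim].
    exists 0. intros b hb. apply RInt_ext, HI. lra.
Qed.

Lemma is_RInt_0_pinfty_minus f g lf lg :
  is_RInt_0_pinfty f lf -> is_RInt_0_pinfty g lg ->
  is_RInt_0_pinfty (fun x => f x - g x) (lf - lg).
Proof.
  intros [Fex Flim] [Gex Glim]. split.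
  - intros b hb. apply (ex_RInt_minus f g); auto.
  - apply is_lim_ext_loc with (fun b => RInt f 0 b - RInt g 0 b); [|now apply is_lim_minus'].
    exists 0. intros b hb. symmetry. apply (RInt_minus f g); [apply Fex|apply Gex]; lra.
Qed.

Lemma is_RInt_0_pinfty_plus f g lf lg :
  is_RInt_0_pinfty f lf -> is_RInt_0_pinfty g lg ->
  is_RInt_0_pinfty (fun x => f x + g x) (lf + lg).
Proof.
  intros [Fex Flim] [Gex Glim]. split.
  - intros b hb. apply (ex_RInt_plus f g); auto.
  - apply is_lim_ext_loc with (fun b => RInt f 0 b + RInt g 0 b); [|now apply is_lim_plus'].
    exists 0. intros b hb. symmetry. apply (RInt_plus f g); [apply Fex|apply Gex]; lra.
Qed.

Lemma is_RInt_0_pinfty_scal f a l :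
  is_RInt_0_pinfty f l -> is_RInt_0_pinfty (fun x => a * f x) (a * l).
Proof.
  intros [Fex Flim]. split.
  - intros b hb. apply (ex_RInt_scal f); auto.
  - apply is_lim_ext_loc with (fun b => a * RInt f 0 b).
    + exists 0. intros b hb. symmetry. apply (RInt_scal f). apply Fex; lra.
    + exact (is_lim_scal_l _ a p_infty (Finite l) Flim).
Qed.

Lemma is_RInt_0_pinfty_sum (f : nat -> R -> R) (l : nat -> R) n :
  (forall i, (i <= n)%nat -> is_RInt_0_pinfty (f i) (l i)) ->
  is_RInt_0_pinfty (fun x => sum_f_R0 (fun i => f i x) n) (sum_f_R0 l n).
Proof.
  induction n as [|n IH]; intros Hf; simpl.
  - apply Hf; lia.
  - apply is_RInt_0_pinfty_plus; [apply IH; intros i hi|]; apply Hf; lia.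
Qed.

Lemma is_RInt_0_pinfty_eventually_const f l T :
  (forall b, 0 <= b -> ex_RInt f 0 b) -> (forall b, T <= b -> is_RInt f 0 b l) ->
  is_RInt_0_pinfty f l.
Proof.
  intros Hex Hconst. split; [exact Hex|].
  apply is_lim_ext_loc with (fun _ => l); [|apply is_lim_const].
  exists T. intros b hb. symmetry. apply is_RInt_unique, Hconst. lra.
Qed.

Fixpoint pow_mul_exp_prim (c : R) (n : nat) (y : R) : R :=
  match n with
  | O => - exp (- (c * y)) / c
  | S k => (- y ^ S k * exp (- (c * y)) + INR (S k) * pow_mul_exp_prim c k y) / c
  end.

Lemma pow_mul_exp_prim_S c n y : pow_mul_exp_prim c (S n) y =
  (- y ^ S n * exp (- (c * y)) + INR (S n) * pow_mul_exp_prim c n y) / c.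
Proof. reflexivity. Qed.

Lemma is_derive_pow_mul_exp_prim c n y : c <> 0 ->
  is_derive (pow_mul_exp_prim c n) y (y ^ n * exp (- (c * y))).
Proof.
  intros hc. induction n as [|n IH].
  - simpl. auto_derive; [easy | field; exact hc].
  - assert (Hhead : is_derive (fun y => - y ^ S n * exp (- (c * y))) y
              (- INR (S n) * y ^ n * exp (- (c * y)) + c * (y ^ S n * exp (- (c * y))))).
    { auto_derive; [easy|].
      change (match n with O => 1 | S _ => INR n + 1 end) with (INR (S n)). simpl pow. ring. }
    pose proof (is_derive_scal _ _ (/ c) _
                  (is_derive_plus _ _ _ _ _ Hhead (is_derive_scal _ _ (INR (S n)) _ IH))) as H.
    replace (y ^ S n * exp (- (c * y))) with
      (scal (/ c) (plus (- INR (S n) * y ^ n * exp (- (c * y)) + c * (y ^ S n * exp (- (c * y))))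
                        (scal (INR (S n)) (y ^ n * exp (- (c * y)))))).
    + eapply is_derive_ext; [|exact H].
      intros t. rewrite pow_mul_exp_prim_S. unfold scal, plus; simpl. unfold mult; simpl.
      field. exact hc.
    + unfold scal, plus; simpl. unfold mult; simpl. field. exact hc.
Qed.

Lemma pow_mul_exp_prim_0 c n : c <> 0 -> pow_mul_exp_prim c n 0 = - INR (fact n) / c ^ S n.
Proof.
  intros hc. induction n as [|n IH].
  - simpl. rewrite Rmult_0_r, Ropp_0, exp_0. field. exact hc.
  - rewrite pow_mul_exp_prim_S, IH, Rmult_0_r, Ropp_0, exp_0, pow_i, fact_simpl, mult_INR by lia.
    change (c ^ S (S n)) with (c * c ^ S n). field. split; [apply pow_nonzero, hc | exact hc].
Qed.

Lemma pow_mul_exp_prim_closed c n y : c <> 0 ->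
  pow_mul_exp_prim c n y =
  - INR (fact n) / c ^ S n * exp (- (c * y)) *
    sum_f_R0 (fun j => (c * y) ^ j / INR (fact j)) n.
Proof.
  intros hc. induction n as [|n IH].
  - simpl. field. exact hc.
  - rewrite pow_mul_exp_prim_S, IH, tech5, fact_simpl, mult_INR, Rpow_mult_distr.
    assert (INR (fact n) <> 0) by apply INR_fact_neq_0.
    assert (c ^ n <> 0) by (apply pow_nonzero, hc).
    rewrite S_INR. simpl pow. field. repeat split; auto. pose proof (pos_INR n). lra.
Qed.

Lemma is_lim_scal_0 (f : R -> R) a :
  is_lim f p_infty 0 -> is_lim (fun y => a * f y) p_infty 0.
Proof.
  intros Hf. pose proof (is_lim_scal_l f a p_infty 0 Hf) as H. simpl in H.
  rewrite Rmult_0_r in H. exact H.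
Qed.

(* From [exp (c y) >= (c y) ^ (k + 1) / (k + 1)!], [y ^ k exp (- c y)] is [O(1 / y)]. *)
Lemma is_lim_pow_mul_exp c k : 0 < c ->
  is_lim (fun y => y ^ k * exp (- (c * y))) p_infty 0.
Proof.
  intros hc.
  set (K := INR (fact (S k)) / c ^ S k).
  apply is_lim_le_le_loc with (fun _ => 0) (fun y => K * / y).
  - exists 0. intros y hy. split.
    { apply Rmult_le_pos; [apply pow_le; lra | left; apply exp_pos]. }
    assert (Htaylor : (c * y) ^ S k <= exp (c * y) * INR (fact (S k))).
    { apply Rle_div_l; [apply INR_fact_lt_0|].
      eapply Rle_trans; [|apply (exp_ge_taylor _ (S k)); nra]. rewrite tech5.
      assert (0 <= sum_f_R0 (fun j => (c * y) ^ j / INR (fact j)) k); [|lra].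
      apply cond_pos_sum. intros j.
      apply Rmult_le_pos; [apply pow_le; nra | left; apply Rinv_0_lt_compat, INR_fact_lt_0]. }
    assert (Hck : 0 < c ^ S k) by (apply pow_lt; lra).
    assert (He : 0 < exp (c * y)) by apply exp_pos.
    assert (Hd : 0 < c ^ S k * y * exp (c * y)) by (apply Rmult_lt_0_compat; nra).
    replace (y ^ k * exp (- (c * y))) with ((c * y) ^ S k * / (c ^ S k * y * exp (c * y))).
    2:{ rewrite exp_Ropp, Rpow_mult_distr. change (y ^ S k) with (y * y ^ k).
        field. repeat split; lra. }
    replace (K * / y) with (exp (c * y) * INR (fact (S k)) * / (c ^ S k * y * exp (c * y))).
    2:{ unfold K. field. repeat split; lra. }
    apply Rmult_le_compat_r; [left; apply Rinv_0_lt_compat, Hd | exact Htaylor].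
  - apply is_lim_const.
  - apply is_lim_scal_0.
    apply (is_lim_inv (fun y => y) p_infty p_infty); [apply is_lim_id | discriminate].
Qed.

Lemma is_lim_pow_mul_exp_prim c n : 0 < c -> is_lim (pow_mul_exp_prim c n) p_infty 0.
Proof.
  intros hc. induction n as [|n IH].
  - apply is_lim_ext with (fun y => (- / c) * (y ^ 0 * exp (- (c * y)))).
    + intros y. simpl. field. lra.
    + apply is_lim_scal_0, is_lim_pow_mul_exp, hc.
  - apply is_lim_ext with (fun y => (- / c) * (y ^ S n * exp (- (c * y)))
                                      + (INR (S n) / c) * pow_mul_exp_prim c n y).
    + intros y. rewrite pow_mul_exp_prim_S. field. lra.
    + replace (Finite 0) with (Finite (0 + 0)) by (f_equal; ring).
      apply is_lim_plus'; apply is_lim_scal_0; [apply is_lim_pow_mul_exp, hc | exact IH].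
Qed.

Lemma is_RInt_pow_mul_exp c n a b : c <> 0 ->
  is_RInt (fun y => y ^ n * exp (- (c * y))) a b
    (pow_mul_exp_prim c n b - pow_mul_exp_prim c n a).
Proof.
  intros hc. apply (is_RInt_derive (pow_mul_exp_prim c n)); intros y _.
  - apply is_derive_pow_mul_exp_prim, hc.
  - apply (ex_derive_continuous (V := R_NormedModule)). auto_derive. easy.
Qed.

Lemma is_RInt_0_pinfty_pow_mul_exp c n : 0 < c ->
  is_RInt_0_pinfty (fun y => y ^ n * exp (- (c * y))) (INR (fact n) / c ^ S n).
Proof.
  intros hc. split.
  - intros b _. eexists. apply is_RInt_pow_mul_exp. lra.
  - apply is_lim_ext with (fun b => pow_mul_exp_prim c n b - pow_mul_exp_prim c n 0).
    { intros b. symmetry. apply is_RInt_unique, is_RInt_pow_mul_exp. lra. }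
    replace (INR (fact n) / c ^ S n) with (0 - pow_mul_exp_prim c n 0).
    + apply is_lim_minus'; [apply is_lim_pow_mul_exp_prim, hc | apply is_lim_const].
    + rewrite pow_mul_exp_prim_0 by lra. field. apply pow_nonzero. lra.
Qed.

Lemma Gamma_nat_S n : Gamma_nat (S n) = INR (fact n).
Proof. unfold Gamma_nat. now rewrite Nat.sub_1_r. Qed.

Lemma gamma_pdf_S n th x : 0 <= x ->
  gamma_pdf (S n) th x = / (INR (fact n) * th ^ S n) * (x ^ n * exp (- (/ th * x))).
Proof.
  intros hx. unfold gamma_pdf. destruct (Rle_dec 0 x) as [_|]; [|lra].
  rewrite Gamma_nat_S, Nat.sub_1_r. simpl Nat.pred.
  replace (- x / th) with (- (/ th * x)) by (unfold Rdiv; ring). unfold Rdiv. ring.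
Qed.

Lemma is_RInt_0_pinfty_gamma_pdf_mul_pow_exp N th k a :
  (1 <= N)%nat -> 0 < th -> 0 <= a ->
  is_RInt_0_pinfty (fun y => gamma_pdf N th y * (y ^ k * exp (- (a * y))))
    (Gamma_nat (k + N) / (Gamma_nat N * th ^ N * (a + / th) ^ (k + N))).
Proof.
  intros hN hth ha. destruct N as [|n]; [lia|].
  assert (hc : 0 < a + / th) by (pose proof (Rinv_0_lt_compat th hth); lra).
  apply is_RInt_0_pinfty_ext with
    (fun y => / (INR (fact n) * th ^ S n) * (y ^ (k + n) * exp (- ((a + / th) * y)))).
  { intros y hy. rewrite gamma_pdf_S, pow_add by lra.
    replace (- ((a + / th) * y)) with (- (/ th * y) + - (a * y)) by ring.
    rewrite exp_plus. ring. }
  rewrite Nat.add_succ_r, !Gamma_nat_S.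
  replace (INR (fact (k + n)) / (INR (fact n) * th ^ S n * (a + / th) ^ S (k + n)))
    with (/ (INR (fact n) * th ^ S n) * (INR (fact (k + n)) / (a + / th) ^ S (k + n))).
  - apply is_RInt_0_pinfty_scal, is_RInt_0_pinfty_pow_mul_exp, hc.
  - field. repeat split; try apply pow_nonzero; try apply INR_fact_neq_0; lra.
Qed.

(* [P(M, lam)], the regularized lower incomplete gamma function; [M = 0] gives a junk value. *)
Definition reg_lower_gamma (M : nat) (lam : R) : R :=
  1 - exp (- lam) * sum_f_R0 (fun j => lam ^ j / INR (fact j)) (M - 1).

Lemma is_RInt_0_pinfty_gamma_pdf_trunc M th lam : (1 <= M)%nat -> 0 < th -> 0 <= lam ->
  is_RInt_0_pinfty (fun x => (if Rlt_dec x (lam * th) then 1 else 0) * gamma_pdf M th x)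
    (reg_lower_gamma M lam).
Proof.
  intros hM hth hlam. destruct M as [|n]; [lia|].
  set (T := lam * th). assert (hT : 0 <= T) by (unfold T; nra).
  set (g := fun x => (if Rlt_dec x T then 1 else 0) * gamma_pdf (S n) th x).
  set (K := INR (fact n) * th ^ S n).
  set (P := pow_mul_exp_prim (/ th) n).
  assert (hc : / th <> 0) by (apply Rinv_neq_0_compat; lra).
  assert (Hbelow : forall b, 0 <= b <= T -> is_RInt g 0 b (/ K * (P b - P 0))).
  { intros b hb. apply (is_RInt_ext (V := R_NormedModule))
      with (fun x => / K * (x ^ n * exp (- (/ th * x)))).
    - intros x hx. rewrite Rmin_left, Rmax_right in hx by lra. unfold g.
      destruct (Rlt_dec x T); [|lra]. rewrite gamma_pdf_S by lra. symmetry. apply Rmult_1_l.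
    - apply (is_RInt_scal (V := R_NormedModule)), is_RInt_pow_mul_exp, hc. }
  assert (Hvalue : / K * (P T - P 0) = reg_lower_gamma (S n) lam).
  { unfold P. rewrite pow_mul_exp_prim_closed, pow_mul_exp_prim_0 by exact hc.
    unfold reg_lower_gamma, K, T. rewrite Nat.sub_1_r. simpl Nat.pred.
    replace (/ th * (lam * th)) with lam by (field; lra).
    rewrite pow_inv. field.
    split; [apply pow_nonzero; lra | apply INR_fact_neq_0]. }
  assert (Habove : forall b, T <= b -> is_RInt g 0 b (reg_lower_gamma (S n) lam)).
  { intros b hb. rewrite <- Hvalue.
    replace (/ K * (P T - P 0)) with (plus (/ K * (P T - P 0)) (scal (b - T) 0)).
    - apply (is_RInt_Chasles (V := R_NormedModule)) with T; [apply Hbelow; lra|].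
      apply (is_RInt_ext (V := R_NormedModule)) with (fun _ => 0).
      + intros x hx. rewrite Rmin_left, Rmax_right in hx by lra. unfold g.
        destruct (Rlt_dec x T); [lra|]. symmetry. apply Rmult_0_l.
      + apply (is_RInt_const (V := R_NormedModule)).
    - unfold plus, scal; simpl. unfold mult; simpl. ring. }
  apply is_RInt_0_pinfty_eventually_const with T; [|exact Habove].
  intros b hb. destruct (Rle_dec b T); eexists; [apply Hbelow | apply Habove]; lra.
Qed.

Lemma gamma_r_pos r : 0 < r -> 0 < gamma_r r.
Proof.
  intros hr. unfold gamma_r. rewrite <- (Rpower_O 2) by lra.
  assert (Rpower 2 0 < Rpower 2 (2 * r)); [apply Rpower_lt; lra | lra].
Qed.

Lemma Psi_pos r x : 0 < r -> 0 < 1 - x ^ 2 -> 0 < Psi r x.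
Proof.
  intros hr hx. unfold Psi. pose proof (gamma_r_pos r hr).
  assert (1 < sqrt (1 + gamma_r r * (1 - x ^ 2))); [|lra].
  rewrite <- sqrt_1 at 1. apply sqrt_lt_1_alt. split; [lra|].
  assert (0 < gamma_r r * (1 - x ^ 2)) by (apply Rmult_lt_0_compat; lra). lra.
Qed.

Lemma half_log2_lt_iff q r : 0 < q -> (/ 2 * log2 q < r <-> q < 1 + gamma_r r).
Proof.
  intros hq. unfold log2, gamma_r, Rpower.
  replace (1 + (exp (2 * r * ln 2) - 1)) with (exp (2 * r * ln 2)) by ring.
  assert (hln2 : 0 < ln 2) by (rewrite <- ln_1; apply ln_increasing; lra).
  rewrite <- (exp_ln q hq) at 2. split; intros H.
  - apply exp_increasing.
    apply (Rmult_lt_compat_r (2 * ln 2)) in H; [|lra].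
    replace (/ 2 * (ln q / ln 2) * (2 * ln 2)) with (ln q) in H by (field; lra). lra.
  - apply exp_lt_inv in H.
    apply (Rmult_lt_reg_r (2 * ln 2)); [lra|].
    replace (/ 2 * (ln q / ln 2) * (2 * ln 2)) with (ln q) by (field; lra). lra.
Qed.

(* [k * (lhs - rhs)] factors as [(k u - D (s - 1)) (k u + D (s + 1))] with [s ^ 2 = 1 + g k],
   and the second factor is positive. *)
Lemma sum_sqr_sub_sqr_lt_iff u D Cx g : 0 <= u -> 0 < D -> 0 < 1 - Cx ^ 2 -> 0 <= g ->
  ((u + D) ^ 2 - (u * Cx) ^ 2 < (1 + g) * D ^ 2 <->
   (1 - Cx ^ 2) * u < D * (sqrt (1 + g * (1 - Cx ^ 2)) - 1)).
Proof.
  intros hu hD hk hg.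
  set (k := 1 - Cx ^ 2) in *.
  set (s := sqrt (1 + g * k)).
  assert (hs : s * s = 1 + g * k) by (apply sqrt_sqrt; nra).
  assert (hs0 : 0 <= s) by apply sqrt_pos.
  assert (Hfac : k * ((u + D) ^ 2 - (u * Cx) ^ 2 - (1 + g) * D ^ 2)
                 = (k * u - D * (s - 1)) * (k * u + D * (s + 1))).
  { transitivity ((k * u - D * (s - 1)) * (k * u + D * (s + 1)) + D * D * (s * s - (1 + g * k)));
      [unfold k; ring | rewrite hs; ring]. }
  assert (hpos : 0 < k * u + D * (s + 1)) by nra.
  split; intros H.
  - assert ((k * u - D * (s - 1)) * (k * u + D * (s + 1)) < 0) by nra. nra.
  - assert ((k * u - D * (s - 1)) * (k * u + D * (s + 1)) < 0) by nra. nra.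
Qed.

Lemma R_rd_lt_iff Ps Pr Cx r x y : 0 <= Ps -> 0 < Pr -> 0 < r -> 0 < 1 - Cx ^ 2 ->
  0 <= x -> 0 <= y ->
  (R_rd Ps Pr Cx x y < r <-> x < (Ps * y + 1) * Psi r Cx / (Pr * (1 - Cx ^ 2))).
Proof.
  intros hPs hPr hr hk hx hy.
  set (D := Ps * y + 1). assert (hD : 0 < D) by (unfold D; nra).
  pose proof (gamma_r_pos r hr) as hg.
  unfold R_rd. replace (Pr * x + Ps * y + 1) with (Pr * x + D) by (unfold D; ring). fold D.
  assert (hu : 0 <= Pr * x) by nra.
  assert (hq : 0 < (Pr * x + D) ^ 2 - (Pr * x * Cx) ^ 2).
  { assert (0 <= (Pr * x) ^ 2 * (1 - Cx ^ 2)) by (apply Rmult_le_pos; [apply pow2_ge_0 | lra]).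
    assert (0 < D ^ 2) by (apply pow_lt, hD).
    replace ((Pr * x + D) ^ 2 - (Pr * x * Cx) ^ 2)
      with ((Pr * x) ^ 2 * (1 - Cx ^ 2) + 2 * (Pr * x) * D + D ^ 2) by ring.
    nra. }
  rewrite half_log2_lt_iff by (apply Rdiv_lt_0_compat; nra).
  rewrite Rlt_div_l by (apply pow_lt, hD).
  assert (hPrk : 0 < Pr * (1 - Cx ^ 2)) by (apply Rmult_lt_0_compat; lra).
  rewrite sum_sqr_sub_sqr_lt_iff, <- Rlt_div_r by (assumption || lra).
  unfold Psi. replace (x * (Pr * (1 - Cx ^ 2))) with ((1 - Cx ^ 2) * (Pr * x)) by ring.
  reflexivity.
Qed.

Lemma indicator_lt_ext a b c d : (a < b <-> c < d) ->
  (if Rlt_dec a b then 1 else 0) = (if Rlt_dec c d then 1 else 0).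
Proof. intros H. destruct (Rlt_dec a b), (Rlt_dec c d); tauto. Qed.

Lemma exp_mul_taylor_affine a b y n :
  exp (- (b * (a * y + 1))) * sum_f_R0 (fun m => (b * (a * y + 1)) ^ m / INR (fact m)) n =
  exp (- b) * sum_f_R0 (fun m => sum_f_R0 (fun k =>
    C m k * a ^ k * b ^ m / INR (fact m) * (y ^ k * exp (- (a * b * y)))) m) n.
Proof.
  replace (- (b * (a * y + 1))) with (- b + - (a * b * y)) by ring.
  rewrite exp_plus, Rmult_assoc. f_equal.
  rewrite scal_sum. apply sum_eq. intros m _.
  assert (INR (fact m) <> 0) by apply INR_fact_neq_0.
  rewrite Rpow_mult_distr, binomial.
  replace (b ^ m * sum_f_R0 (fun i => C m i * (a * y) ^ i * 1 ^ (m - i)) m / INR (fact m)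
             * exp (- (a * b * y)))
    with (b ^ m / INR (fact m) * exp (- (a * b * y))
             * sum_f_R0 (fun i => C m i * (a * y) ^ i * 1 ^ (m - i)) m)
    by (field; assumption).
  rewrite scal_sum. apply sum_eq. intros k _.
  rewrite pow1, Rpow_mult_distr. field. assumption.
Qed.

Lemma is_RInt_0_pinfty_gamma_pdf_mul_reg_lower_gamma N M th a b :
  (1 <= N)%nat -> 0 < th -> 0 <= a -> 0 <= b ->
  is_RInt_0_pinfty (fun y => gamma_pdf N th y * reg_lower_gamma M (b * (a * y + 1)))
    (1 - exp (- b) / (Gamma_nat N * th ^ N) *
       sum_f_R0 (fun m => sum_f_R0 (fun k =>
         C m k * a ^ k * Gamma_nat (k + N) * b ^ m
         / (Gamma_nat (m + 1) * (a * b + / th) ^ (k + N))) m) (M - 1)).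
Proof.
  intros hN hth ha hb.
  set (coef := fun m k => C m k * a ^ k * b ^ m / INR (fact m)).
  apply is_RInt_0_pinfty_ext with (fun y =>
    gamma_pdf N th y * (y ^ 0 * exp (- (0 * y))) - exp (- b) *
    sum_f_R0 (fun m => sum_f_R0 (fun k =>
      coef m k * (gamma_pdf N th y * (y ^ k * exp (- (a * b * y))))) m) (M - 1)).
  { intros y _. symmetry. unfold reg_lower_gamma. rewrite exp_mul_taylor_affine.
    rewrite Rmult_0_l, Ropp_0, exp_0, pow_O, Rmult_1_r, Rmult_minus_distr_l, Rmult_1_r.
    f_equal. rewrite <- (Rmult_assoc (gamma_pdf N th y)), (Rmult_comm (gamma_pdf N th y) (exp (- b))),
      Rmult_assoc. f_equal.
    rewrite scal_sum. apply sum_eq. intros m _.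
    rewrite Rmult_comm, scal_sum. apply sum_eq. intros k _. unfold coef. ring. }
  replace (1 - _) with
    (Gamma_nat (0 + N) / (Gamma_nat N * th ^ N * (0 + / th) ^ (0 + N)) - exp (- b) *
     sum_f_R0 (fun m => sum_f_R0 (fun k => coef m k *
       (Gamma_nat (k + N) / (Gamma_nat N * th ^ N * (a * b + / th) ^ (k + N)))) m) (M - 1)).
  - apply is_RInt_0_pinfty_minus.
    + apply is_RInt_0_pinfty_gamma_pdf_mul_pow_exp; lra || assumption.
    + apply is_RInt_0_pinfty_scal.
      apply is_RInt_0_pinfty_sum. intros m _. apply is_RInt_0_pinfty_sum. intros k _.
      apply is_RInt_0_pinfty_scal, is_RInt_0_pinfty_gamma_pdf_mul_pow_exp; try assumption.
      apply Rmult_le_pos; assumption.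
  - assert (hG : Gamma_nat N <> 0).
    { destruct N as [|n]; [lia|]. rewrite Gamma_nat_S. apply INR_fact_neq_0. }
    assert (hthN : th ^ N <> 0) by (apply pow_nonzero; lra).
    assert (hc : 0 < a * b + / th)
      by (pose proof (Rinv_0_lt_compat th hth); pose proof (Rmult_le_pos a b ha hb); lra).
    symmetry. f_equal.
    + rewrite Rplus_0_l, Nat.add_0_l, pow_inv. field. split; assumption.
    + unfold Rdiv at 1. rewrite Rmult_assoc. f_equal.
      rewrite scal_sum. apply sum_eq. intros m _.
      rewrite Rmult_comm, scal_sum. apply sum_eq. intros k _.
      unfold coef. rewrite Nat.add_1_r, Gamma_nat_S.
      assert (INR (fact m) <> 0) by apply INR_fact_neq_0.
      assert ((a * b + / th) ^ (k + N) <> 0) by (apply pow_nonzero; lra).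
      field. repeat split; assumption.
Qed.

Theorem theorem1 (Ps Pr pi_rd pi_sd r Cx : R) (m_rd m_sd : nat)
  (hPs : 0 < Ps) (hPr : 0 < Pr) (hpird : 0 < pi_rd) (hpisd : 0 < pi_sd)
  (hmrd : (1 <= m_rd)%nat) (hmsd : (1 <= m_sd)%nat)
  (hr : 0 < r) (hCx0 : 0 <= Cx) (hCx1 : Cx < 1) :
  let th_rd := pi_rd / INR m_rd in
  let th_sd := pi_sd / INR m_sd in
  let beta := Psi r Cx / (Pr * th_rd * (1 - Cx ^ 2)) in
  outage_prob_is Ps Pr Cx r m_rd th_rd m_sd th_sd
    (1 - exp (- beta) / (Gamma_nat m_sd * th_sd ^ m_sd) *
       sum_f_R0 (fun m =>
         sum_f_R0 (fun k =>
           C m k * Ps ^ k * Gamma_nat (k + m_sd) * beta ^ m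
           / (Gamma_nat (m + 1) * (Ps * beta + / th_sd) ^ (k + m_sd))) m)
       (m_rd - 1)).
Proof.
  intros th_rd th_sd beta.
  assert (hth_rd : 0 < th_rd) by (apply Rdiv_lt_0_compat; [|apply lt_0_INR]; lia || lra).
  assert (hth_sd : 0 < th_sd) by (apply Rdiv_lt_0_compat; [|apply lt_0_INR]; lia || lra).
  assert (hk : 0 < 1 - Cx ^ 2) by (simpl; nra).
  assert (hPrk : 0 < Pr * th_rd * (1 - Cx ^ 2)) by (apply Rmult_lt_0_compat; [apply Rmult_lt_0_compat|]; assumption).
  assert (hbeta : 0 < beta) by (apply Rdiv_lt_0_compat; [apply Psi_pos|]; lra).
  exists (fun y => reg_lower_gamma m_rd (beta * (Ps * y + 1))). split.
  - intros y hy. apply improper_integral0_of_is_RInt_0_pinfty.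
    apply is_RInt_0_pinfty_ext with (fun x =>
      (if Rlt_dec x (beta * (Ps * y + 1) * th_rd) then 1 else 0) * gamma_pdf m_rd th_rd x).
    + intros x hx. f_equal. apply indicator_lt_ext.
      rewrite R_rd_lt_iff by lra.
      replace (beta * (Ps * y + 1) * th_rd) with ((Ps * y + 1) * Psi r Cx / (Pr * (1 - Cx ^ 2)));
        [reflexivity | unfold beta; field; lra].
    + apply is_RInt_0_pinfty_gamma_pdf_trunc; [lia | lra |].
      apply Rmult_le_pos; [lra | nra].
  - apply improper_integral0_of_is_RInt_0_pinfty,
      is_RInt_0_pinfty_gamma_pdf_mul_reg_lower_gamma; lia || lra.
Qed.
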